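(* Let $P=\Bbbk[x_1,x_2,x_3]$ with Poisson bracket $\{x_1,x_2\}=0$, $\{x_2,x_3\}=2x_1x_2$, $\{x_3,x_1\}=x_1^2$. If $G$ is a nontrivial finite subgroup of $\mathrm{PAut}_{\mathrm{gr}}(P)$ generated by Poisson reflections, then $P^G$ is not isomorphic to $P$ as Poisson algebras.
   Context: $\Bbbk$ is algebraically closed of characteristic $0$; $P$ has the standard grading. $\mathrm{PAut}_{\mathrm{gr}}(P)$ is the group of degree-preserving bijective algebra homomorphisms preserving the bracket. A Poisson reflection is a finite-order $\phi\in\mathrm{PAut}_{\mathrm{gr}}(P)$ such that $\phi|_{P_1}$ has eigenvalues $1,1,\xi$ with $\xi\neq1$ a primitive root of unity. $P^G$ is the subalgebra of $G$-invariants with the restricted bracket. *)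

From HB Require Import structures.
From mathcomp Require Import all_boot all_order all_algebra.
From mathcomp Require Import mpoly.
From Stdlib Require List.
Set Implicit Arguments. Unset Strict Implicit. Unset Printing Implicit Defensive.
Import GRing.Theory.
Local Open Scope ring_scope.

(* P = k[x1,x2,x3]; variables x1,x2,x3 are 'X_0,'X_1,'X_2. *)
Notation Pol k := {mpoly k[3]}.

Section Defs.
Variable k : fieldType.

Definition x1 : Pol k := 'X_(0 : 'I_3).
Definition x2 : Pol k := 'X_(1 : 'I_3).
Definition x3 : Pol k := 'X_(2 : 'I_3).

Definition brgen (i j : 'I_3) : Pol k :=
  match nat_of_ord i, nat_of_ord j with
  | 1, 2 => 2%:R * x1 * x2
  | 2, 1 => - (2%:R * x1 * x2)
  | 2, 0 => x1 ^+ 2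
  | 0, 2 => - x1 ^+ 2
  | _, _ => 0
  end.

Definition pbr (f g : Pol k) : Pol k :=
  \sum_(i < 3) \sum_(j < 3) mderiv i f * mderiv j g * brgen i j.

Definition is_gr_poisson_aut (phi : Pol k -> Pol k) : Prop :=
  [/\ bijective phi,
      (forall f g, phi (f + g) = phi f + phi g),
      (forall f g, phi (f * g) = phi f * phi g),
      phi 1 = 1 &
      (forall (c : k) f, phi (c *: f) = c *: phi f)] /\
  (forall (d : nat) f, f \is d.-homog -> phi f \is d.-homog) /\
  (forall f g, phi (pbr f g) = pbr (phi f) (phi g)).

Definition deg1_mx (phi : Pol k -> Pol k) : 'M[k]_3 :=
  \matrix_(i < 3, j < 3) (phi 'X_i)@_(U_(j)%MM).

Definition finite_order (phi : Pol k -> Pol k) : Prop :=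
  exists n : nat, (0 < n)%N /\ forall f, iter n phi f = f.

Definition poisson_reflection (phi : Pol k -> Pol k) : Prop :=
  is_gr_poisson_aut phi /\ finite_order phi /\
  exists xi : k, [/\ xi != 1,
     (exists n : nat, (0 < n)%N /\ n.-primitive_root xi) &
     char_poly (deg1_mx phi) = ('X - 1) ^+ 2 * ('X - xi%:P)].

Definition is_finite_subgroup (G : seq (Pol k -> Pol k)) : Prop :=
  [/\ (forall g, List.In g G -> is_gr_poisson_aut g),
      List.In id G,
      (forall g h, List.In g G -> List.In h G -> List.In (g \o h) G) &
      (forall g, List.In g G -> exists2 h, List.In h G & forall f, h (g f) = f)].

(* G is generated by the Poisson reflections it contains (G finite, so
   every element is a finite composite of such reflections). *)
Definition generated_by_reflections (G : seq (Pol k -> Pol k)) : Prop :=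
  forall g, List.In g G ->
    exists rs : seq (Pol k -> Pol k),
      (forall r, List.In r rs -> List.In r G /\ poisson_reflection r) /\
      forall f, g f = foldr (fun r acc => r \o acc) id rs f.

Definition invariant (G : seq (Pol k -> Pol k)) (f : Pol k) : Prop :=
  forall g, List.In g G -> g f = f.

Definition invariants_poisson_iso_P (G : seq (Pol k -> Pol k)) : Prop :=
  exists psi : Pol k -> Pol k,
    [/\ injective psi,
        (forall f g, psi (f + g) = psi f + psi g),
        (forall f g, psi (f * g) = psi f * psi g),
        psi 1 = 1 &
        (forall (c : k) f, psi (c *: f) = c *: psi f)] /\
    [/\ (forall f, invariant G (psi f)),
        (forall h, invariant G h -> exists f, psi f = h) &
        (forall f g, psi (pbr f g) = pbr (psi f) (psi g))].
End Defs.

(** The bracket is the Jacobian bracket {f, g} = det(∇f, ∇g, ∇Ω) of the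
    Casimir Ω = x1^2 x2.  Let ψ : P -> P^G be a Poisson isomorphism, put
    p_i = ψ(x_i) and J = det(∂_j p_i).  As the p_i satisfy the defining
    relations of the bracket, ∇(Ω ∘ p) = J ∇Ω; comparing mixed partials shows
    that J is a polynomial in x1^2 x2, so J(0,1,0) = J(0,0,0).  A reflection
    r ∈ G fixes every p_i and acts linearly with determinant ξ ≠ 1, so the
    chain rule at the origin gives J(0) = ξ J(0), hence J(0) = 0.  By the
    chain rule through ψ, the Jacobian determinant of any three invariants
    then vanishes at (0,1,0).
    On the other hand the bracket forces every reflection, hence every
    element of G, to act as x1 ↦ x1, x2 ↦ b x2, x3 ↦ x3 + e x2 with b a root
    of unity.  So x1, x2^N and an average of x3 over the image S of G in the
    affine group of the line are invariants, and their Jacobian determinant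
    at (0,1,0) is N |S| ≠ 0. *)

From Pilot Require Import Defs.
From HB Require Import structures.
From mathcomp Require Import all_boot all_order all_algebra.
From mathcomp Require Import mpoly.
From Stdlib Require List.
From mathcomp Require Import ring.

Set Implicit Arguments. Unset Strict Implicit. Unset Printing Implicit Defensive.
Import GRing.Theory.
Local Open Scope ring_scope.

Lemma big_ord3 (T : Type) (idx : T) (op : Monoid.law idx) (F : 'I_3 -> T) :
  \big[op/idx]_(i < 3) F i = op (op (F 0) (F 1)) (F 2).
Proof.
rewrite !big_ord_recl big_ord0 Monoid.mulm1 Monoid.mulmA.
by congr (op (op (F _) (F _)) (F _)); apply/val_inj.
Qed.

Lemma ord3P (i : 'I_3) : [\/ i = 0, i = 1 | i = 2].
Proof.
by case: i => [[|[|[|//]]] ?]; [constructor 1 | constructor 2 | constructor 3]; apply/val_inj.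
Qed.

Lemma det_mx33 (R : comNzRingType) (A : 'M[R]_3) :
  \det A = A 0 0 * (A 1 1 * A 2 2 - A 1 2 * A 2 1)
         - A 0 1 * (A 1 0 * A 2 2 - A 1 2 * A 2 0)
         + A 0 2 * (A 1 0 * A 2 1 - A 1 1 * A 2 0).
Proof.
rewrite (expand_det_row _ 0) !big_ord_recl big_ord0 /cofactor.
rewrite !(expand_det_row _ 0) !big_ord_recl !big_ord0 /cofactor !det_mx11 !mxE.
(* Reindexing through [inord] lets [/=] compute the lifted ordinals. *)
pose a i j := A (inord i) (inord j).
have Aa i j : A i j = a i j by rewrite /a !inord_val.
by rewrite !{}Aa /=; ring.
Qed.

Lemma det_reflection_char_poly (R : comNzRingType) (A : 'M[R]_3) xi :
  char_poly A = ('X - 1) ^+ 2 * ('X - xi%:P) -> \det A = xi.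
Proof.
move=> charA; have := char_poly_det A.
rewrite charA -horner_coef0 hornerM horner_exp !hornerXsubC => eq_det.
have -> : \det A = - ((-1) ^+ 3 * \det A) by ring.
by rewrite -eq_det; ring.
Qed.

Lemma cubic_roots_eq (F : idomainType) (a b xi : F) : xi != 1 ->
    ('X - a%:P) ^+ 2 * ('X - b%:P) = ('X - 1) ^+ 2 * ('X - xi%:P) ->
  a = 1 /\ b = xi.
Proof.
move=> xi_neq1 eq_cubic.
have XsubC_neq0 c : ('X - c%:P : {poly F}) != 0 by rewrite polyXsubC_eq0.
have : root (('X - 1) ^+ 2 * ('X - xi%:P)) a.
  by rewrite -eq_cubic !rootM root_XsubC eqxx.
rewrite expr2 !rootM -polyC1 !root_XsubC orbb => /orP [/eqP a1|/eqP axi].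
  split=> //; move: eq_cubic; rewrite a1 polyC1.
  by move/(mulfI (expf_neq0 2 (XsubC_neq0 1))) => /addrI /oppr_inj /polyC_inj.
have quad : ('X - xi%:P) * ('X - b%:P) = ('X - 1) ^+ 2.
  by apply: (mulfI (XsubC_neq0 xi)); rewrite mulrA -expr2 [RHS]mulrC -eq_cubic axi.
move/(congr1 (horner^~ xi)): quad.
by rewrite hornerM horner_exp !hornerXsubC subrr mul0r => /esym/eqP;
  rewrite expf_eq0 subr_eq0 (negbTE xi_neq1).
Qed.

(** * Partial derivatives and Jacobians *)

Section PartialDerivatives.
Variables (n : nat) (R : nzRingType).
Implicit Types (p : {mpoly R[n]}) (u : 'I_n -> R).

Lemma mpoly_ring_ind (Q : {mpoly R[n]} -> Prop) :
  (forall c, Q c%:MP) -> (forall i, Q 'X_i) ->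
  (forall p q, Q p -> Q q -> Q (p + q)) -> (forall p q, Q p -> Q q -> Q (p * q)) ->
  forall p, Q p.
Proof.
move=> QC QX QD QM p; rewrite [p]mpolyE.
apply: (big_ind Q); [by rewrite -mpolyC0 | exact: QD |] => m _.
rewrite -mul_mpolyC; apply: (QM) => //.
rewrite mpolyXE_id; apply: (big_ind Q); [by rewrite -mpolyC1 | exact: (QM) |] => i _.
by elim: (m i) => [|e IH]; [rewrite expr0 -mpolyC1 | rewrite exprS; apply: (QM)].
Qed.

Lemma mpolyXU_neq0 (i : 'I_n) : ('X_i : {mpoly R[n]}) != 0.
Proof.
apply/eqP => Xi0; have := mcoeffXU R i i.
by rewrite Xi0 mcoeff0 eqxx => /eqP; rewrite eq_sym oner_eq0.
Qed.

Lemma mderivXU (i j : 'I_n) : mderiv j ('X_i : {mpoly R[n]}) = (i == j)%:R.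
Proof.
rewrite mderivX mnm1E; case: eqP => [->|_]; last by rewrite scale0r.
by rewrite -{1}[U_(j)%MM]add0m addmK mpolyX0 scale1r.
Qed.

Lemma mderiv_linear_form u j : mderiv j (\sum_l u l *: 'X_l : {mpoly R[n]}) = (u j)%:MP.
Proof.
rewrite raddf_sum (bigD1 j) //= big1 => [|l /negbTE l_neq_j].
  by rewrite mderivZ mderivXU eqxx -mul_mpolyC mulr1 addr0.
by rewrite mderivZ mderivXU l_neq_j scaler0.
Qed.

Lemma mcoeff_linear_form u i : (\sum_l u l *: 'X_l : {mpoly R[n]})@_U_(i) = u i.
Proof.
rewrite raddf_sum (bigD1 i) //= big1 => [|l /negbTE l_neq_i].
  by rewrite mcoeffZ mcoeffXU eqxx mulr1 addr0.
by rewrite mcoeffZ mcoeffXU l_neq_i mulr0.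
Qed.

Lemma linear_form_dhomog1 u : (\sum_l u l *: 'X_l : {mpoly R[n]}) \is 1.-homog.
Proof. by apply: rpred_sum => l _; rewrite rpredZ // dhomogX /= mdeg1. Qed.

Lemma dhomog1E p : p \is 1.-homog -> p = \sum_i p@_U_(i) *: 'X_i.
Proof.
move=> p_homog; apply/mpolyP => m; rewrite raddf_sum /=.
under eq_bigr do rewrite mcoeffZ mcoeffX.
have [/mdeg1P [i /eqP ->]|m_deg] := boolP (mdeg m == 1%N).
  rewrite (bigD1 i) //= eqxx mulr1 big1 ?addr0 // => j /negbTE j_neq_i.
  by case: eqP => [/mnmP/(_ i)|]; rewrite ?mulr0 // !mnm1E eqxx j_neq_i.
rewrite (dhomog_nemf_coeff p_homog m_deg) big1 // => j _.
by case: eqP => [Uj_m|]; rewrite ?mulr0 //; case/negP: m_deg; rewrite -Uj_m mdeg1.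
Qed.

Lemma mcoeff_mderiv_mulX i p m : (mderiv i p * 'X_i)@_m = p@_m *+ m i.
Proof.
have [m_i0|m_i_gt0] := posnP (m i).
  rewrite m_i0 mulr0n; apply/eqP; rewrite mcoeff_eq0 (perm_mem (msuppMX _ _)).
  by apply/negP => /mapP [m' _ def_m]; move: m_i0; rewrite def_m mnmDE mnm1E eqxx.
have def_m : m = (U_(i) + (m - U_(i)))%MM.
  by rewrite addmC submK //; apply/mnm_lepP => j; rewrite mnm1E; case: eqP => [<-|].
rewrite {1}def_m mcoeffMX mcoeff_mderiv addmC -def_m mnmBE mnm1E eqxx.
by rewrite subn1 prednK.
Qed.

Definition jacobian m (F : 'I_m -> {mpoly R[n]}) : 'M_(m, n) :=
  \matrix_(i, j) mderiv j (F i).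

End PartialDerivatives.

Arguments mpolyXU_neq0 {n R} i.

Lemma mderivXn (n : nat) (R : comNzRingType) j (p : {mpoly R[n]}) m :
  mderiv j (p ^+ m.+1) = (p ^+ m * mderiv j p) *+ m.+1.
Proof.
elim: m => [|m IH]; first by rewrite expr1 expr0 mul1r.
by rewrite exprS mderivM IH exprS; ring.
Qed.

Lemma meval_linear_form (n : nat) (R : comNzRingType) (u v : 'I_n -> R) :
  meval v (\sum_l u l *: 'X_l : {mpoly R[n]}) = \sum_l u l * v l.
Proof. by rewrite raddf_sum; apply: eq_bigr => l _ /=; rewrite mevalZ mevalXU. Qed.

Definition alg_morph (n m : nat) (R : comNzRingType) (phi : {mpoly R[n]} -> {mpoly R[m]}) :=
  [/\ {morph phi : f g / f + g}, {morph phi : f g / f * g}, phi 1 = 1 &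
      forall c, {morph phi : f / c *: f}].

Section AlgebraMorphism.
Variables (n m : nat) (R : comNzRingType) (phi : {mpoly R[n]} -> {mpoly R[m]}).
Hypothesis phi_alg : alg_morph phi.

Lemma alg_morphD f g : phi (f + g) = phi f + phi g. Proof. by case: phi_alg. Qed.
Lemma alg_morphM f g : phi (f * g) = phi f * phi g. Proof. by case: phi_alg. Qed.
Lemma alg_morph1 : phi 1 = 1. Proof. by case: phi_alg. Qed.
Lemma alg_morphZ c f : phi (c *: f) = c *: phi f. Proof. by case: phi_alg => _ _ _ ->. Qed.

Lemma alg_morphC c : phi c%:MP = c%:MP.
Proof. by rewrite -alg_mpolyC alg_morphZ alg_morph1 alg_mpolyC. Qed.

Lemma alg_morph0 : phi 0 = 0.
Proof. by rewrite -mpolyC0 alg_morphC. Qed.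

Lemma alg_morph_nat k : phi k%:R = k%:R.
Proof. by rewrite -mpolyC_nat alg_morphC mpolyC_nat. Qed.

Lemma alg_morphX f k : phi (f ^+ k) = phi f ^+ k.
Proof. by elim: k => [|k IH]; rewrite ?alg_morph1 // !exprS alg_morphM IH. Qed.

Lemma alg_morph_sum I (r : seq I) (P : pred I) (F : I -> {mpoly R[n]}) :
  phi (\sum_(i <- r | P i) F i) = \sum_(i <- r | P i) phi (F i).
Proof. exact: (big_morph phi alg_morphD alg_morph0). Qed.

Lemma mderiv_alg_morph j f :
  mderiv j (phi f) = \sum_l phi (mderiv l f) * mderiv j (phi 'X_l).
Proof.
elim/mpoly_ring_ind: f => [c|i|p q IHp IHq|p q IHp IHq].
- by rewrite alg_morphC mderivC big1 // => l _; rewrite mderivC alg_morph0 mul0r.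
- rewrite (bigD1 i) //= big1 ?addr0 => [|l /negbTE l_neq_i].
    by rewrite mderivXU eqxx alg_morph_nat mul1r.
  by rewrite mderivXU eq_sym l_neq_i alg_morph0 mul0r.
- rewrite alg_morphD mderivD IHp IHq -big_split; apply: eq_bigr => l _ /=.
  by rewrite mderivD alg_morphD mulrDl.
- rewrite alg_morphM mderivM IHp IHq mulr_suml mulr_sumr -big_split.
  by apply: eq_bigr => l _ /=; rewrite mderivM alg_morphD !alg_morphM; ring.
Qed.

Lemma jacobian_alg_morph k (F : 'I_k -> {mpoly R[n]}) :
  jacobian (phi \o F) = map_mx phi (jacobian F) *m jacobian (fun l => phi 'X_l).
Proof.
apply/matrixP => i j; rewrite !mxE mderiv_alg_morph.
by apply: eq_bigr => l _; rewrite !mxE.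
Qed.

Lemma meval_alg_morph (v : 'I_n -> R) (w : 'I_m -> R) f :
  (forall i, meval w (phi 'X_i) = v i) -> meval w (phi f) = meval v f.
Proof.
move=> phiX; elim/mpoly_ring_ind: f => [c|i|p q IHp IHq|p q IHp IHq].
- by rewrite alg_morphC !mevalC.
- by rewrite phiX mevalXU.
- by rewrite alg_morphD !mevalD IHp IHq.
- by rewrite alg_morphM !mevalM IHp IHq.
Qed.

End AlgebraMorphism.

Section LinearSubstitution.
Variables (n : nat) (R : comNzRingType) (A : 'M[R]_n) (phi : {mpoly R[n]} -> {mpoly R[n]}).
Hypotheses (phi_alg : alg_morph phi) (phiX : forall i, phi 'X_i = \sum_j A i j *: 'X_j).

Lemma jacobian_linear : jacobian (fun i => phi 'X_i) = map_mx (@mpolyC n R) A.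
Proof. by apply/matrixP => i j; rewrite !mxE phiX mderiv_linear_form. Qed.

Lemma meval0_linear f : meval (fun=> 0) (phi f) = meval (fun=> 0) f.
Proof.
apply: meval_alg_morph => // i; rewrite phiX raddf_sum big1 // => j _ /=.
by rewrite mevalZ mevalXU mulr0.
Qed.

Lemma jacobian0_invariant k (F : 'I_k -> {mpoly R[n]}) : (forall i, phi (F i) = F i) ->
  map_mx (meval (fun=> 0)) (jacobian F) = map_mx (meval (fun=> 0)) (jacobian F) *m A.
Proof.
move=> Finv; have JF : jacobian F = jacobian (phi \o F).
  by apply/matrixP => i j; rewrite !mxE /= Finv.
rewrite {1}JF jacobian_alg_morph // jacobian_linear map_mxM; congr (_ *m _).
  by apply/matrixP => i j; rewrite !mxE; exact: meval0_linear.
by rewrite -map_mx_comp map_mx_id // => c /=; rewrite mevalC.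
Qed.

Lemma linear_dhomog1 f : f \is 1.-homog -> phi f = \sum_j (\sum_l f@_U_(l) * A l j) *: 'X_j.
Proof.
move=> f_homog; rewrite {1}(dhomog1E f_homog) alg_morph_sum //.
under eq_bigr do rewrite alg_morphZ // phiX scaler_sumr.
rewrite exchange_big; apply: eq_bigr => j _; rewrite scaler_suml.
by apply: eq_bigr => l _; rewrite scalerA.
Qed.

End LinearSubstitution.

Lemma det_jacobian0_invariant (n : nat) (R : idomainType) (A : 'M[R]_n)
    (phi : {mpoly R[n]} -> {mpoly R[n]}) (F : 'I_n -> {mpoly R[n]}) :
    alg_morph phi -> (forall i, phi 'X_i = \sum_j A i j *: 'X_j) ->
    (forall i, phi (F i) = F i) -> \det A != 1 ->
  meval (fun=> 0) (\det (jacobian F)) = 0.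
Proof.
move=> phi_alg phiX Finv detA_neq1.
have /(congr1 determinant) := jacobian0_invariant phi_alg phiX Finv.
rewrite det_mulmx det_map_mx => /eqP; rewrite -subr_eq0 -{1}[X in X - _]mulr1 -mulrBr.
by rewrite mulf_eq0 subr_eq0 (eq_sym 1) (negbTE detA_neq1) orbF => /eqP.
Qed.

(** * The Poisson bracket of P *)

Section PoissonPolynomials.
Variable k : fieldType.
Hypothesis char0 : [pchar k] =i pred0.
Local Notation P := {mpoly k[3]}.

Lemma natf_inj a b : (a%:R : k) = b%:R -> a = b.
Proof.
move=> eq_ab; wlog le_ba : a b eq_ab / (b <= a)%N.
  by move=> Hwlog; case: (leqP b a) => [|/ltnW] /Hwlog; [apply | move=> <-].
apply/eqP; rewrite eqn_leq le_ba andbT -subn_eq0 -((pcharf0P k).1 char0).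
by rewrite natrB // eq_ab subrr.
Qed.

Lemma natf_neq0 m : (0 < m)%N -> (m%:R : k) != 0.
Proof. by rewrite ((pcharf0P k).1 char0) -lt0n. Qed.

Lemma mulrnI (x : k) : x != 0 -> injective (fun m => x *+ m).
Proof.
move=> x_neq0 a b /=; rewrite -[x *+ a]mulr_natr -[x *+ b]mulr_natr.
by move/(mulfI x_neq0)/natf_inj.
Qed.

Definition casimir : P := 'X_0 ^+ 2 * 'X_1.

Lemma mderiv_casimir : [/\ mderiv 0 casimir = 2%:R * 'X_0 * 'X_1,
  mderiv 1 casimir = 'X_0 ^+ 2 & mderiv 2 casimir = 0].
Proof. by rewrite /casimir !mderivM !mderivXU /=; split; ring. Qed.

Lemma pbr_det f g : pbr f g = \det (jacobian (fun i : 'I_3 => [:: f; g; casimir]`_i)).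
Proof.
rewrite /pbr det_mx33 !mxE /= !big_ord3 /casimir /brgen /x1 /x2 /=.
by rewrite !mderivM !mderivXU /=; ring.
Qed.

Definition bracket_relations (p : 'I_3 -> P) :=
  [/\ pbr (p 0) (p 1) = 0, pbr (p 1) (p 2) = 2%:R * p 0 * p 1 & pbr (p 2) (p 0) = p 0 ^+ 2].

Lemma bracket_relationsX : bracket_relations (fun i => 'X_i).
Proof. by split; rewrite pbr_det det_mx33 !mxE /= /casimir !mderivM !mderivXU /=; ring. Qed.

Lemma alg_morph_bracket_relations (phi : P -> P) : alg_morph phi ->
    (forall f g, phi (pbr f g) = pbr (phi f) (phi g)) ->
  bracket_relations (fun i => phi 'X_i).
Proof.
move=> phi_alg phi_pbr; case: bracket_relationsX => r01 r12 r20.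
split; rewrite -phi_pbr ?r01 ?r12 ?r20.
- exact: alg_morph0.
- by rewrite !(alg_morphM phi_alg) (alg_morph_nat phi_alg).
- exact: alg_morphX.
Qed.

(* Cramer's rule: {p_(i+1), p_(i+2)} = sum_j cofactor (jacobian p) i j * d_j casimir. *)
Lemma mderiv_casimir_comp (p : 'I_3 -> P) : bracket_relations p ->
  forall j, mderiv j (p 0 ^+ 2 * p 1) = \det (jacobian p) * mderiv j casimir.
Proof.
case=> r01 r12 r20 j.
have -> : mderiv j (p 0 ^+ 2 * p 1) = pbr (p 1) (p 2) * mderiv j (p 0)
    + pbr (p 2) (p 0) * mderiv j (p 1) + pbr (p 0) (p 1) * mderiv j (p 2).
  by rewrite r01 r12 r20 !mderivM; ring.
case: (ord3P j) => ->.
all: by rewrite !pbr_det !det_mx33 !mxE /= /casimir !mderivM !mderivXU /=; ring.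
Qed.

Definition pt3 (a b c : k) (i : 'I_3) : k := [:: a; b; c]`_i.

Lemma meval_pbr_linear (u w v : 'I_3 -> k) :
  meval v (pbr (\sum_l u l *: 'X_l) (\sum_l w l *: 'X_l)) =
  (u 1 * w 2 - u 2 * w 1) * (2%:R * v 0 * v 1) + (u 2 * w 0 - u 0 * w 2) * v 0 ^+ 2.
Proof.
rewrite pbr_det det_mx33 !mxE /= !mderiv_linear_form.
case: mderiv_casimir => -> -> ->.
by rewrite !(mevalD, mevalN, mevalM, mevalC, mevalXU) /=; ring.
Qed.

Section CasimirMultiplier.
Variables J h : P.
Hypothesis dh : forall j, mderiv j h = J * mderiv j casimir.

Lemma mderiv2_casimir_multiplier : mderiv 2 J = 0.
Proof.
have := mderiv_comm 1 2 h; rewrite !dh; case: mderiv_casimir => _ -> ->.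
rewrite mulr0 mderiv0 mderivM expr2 mderivM mderivXU /= !(mulr0, mul0r, addr0) => /eqP.
by rewrite !mulf_eq0 orbb (negbTE (mpolyXU_neq0 _)) orbF => /eqP.
Qed.

Lemma euler_casimir_multiplier : mderiv 0 J * 'X_0 = (mderiv 1 J * 'X_1) *+ 2.
Proof.
have := mderiv_comm 0 1 h; rewrite !dh; case: mderiv_casimir => -> -> _ => comm.
have : 'X_0 * (mderiv 1 J * 'X_1 * 2%:R - mderiv 0 J * 'X_0) = 0.
  rewrite -[RHS](subrr (mderiv 0 (J * 'X_0 ^+ 2))) -{1}comm.
  by rewrite !mderivM !mderivXU -mpolyC_nat !mderivC /=; ring.
move/eqP; rewrite mulf_eq0 (negbTE (mpolyXU_neq0 _)) subr_eq0 /=.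
by move=> /eqP <-; rewrite mulr_natr.
Qed.

Lemma casimir_multiplier_support m : J@_m != 0 -> m 0 = (m 1).*2 /\ m 2 = 0%N.
Proof.
move=> Jm_neq0; split.
  have := congr1 (mcoeff m) euler_casimir_multiplier.
  by rewrite mcoeffMn !mcoeff_mderiv_mulX -mulrnA muln2 => /(mulrnI Jm_neq0).
have := congr1 (fun q => (q * 'X_2)@_m) mderiv2_casimir_multiplier.
by rewrite /= mcoeff_mderiv_mulX mul0r mcoeff0 -(mulr0n J@_m) => /(mulrnI Jm_neq0).
Qed.

Lemma meval_casimir_multiplier : meval (pt3 0 1 0) J = meval (fun=> 0) J.
Proof.
rewrite !mevalE; apply: eq_big_seq => m m_supp; congr (_ * _); rewrite !big_ord3.
have [-> ->] : m 0 = (m 1).*2 /\ m 2 = 0%N.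
  by apply: casimir_multiplier_support; rewrite -mcoeff_msupp.
by rewrite /pt3 /= !expr0 !mulr1 expr1n !expr0n; case: (m 1) => [|?] /=; rewrite ?mul0r.
Qed.

End CasimirMultiplier.

(** * Graded Poisson automorphisms and reflections *)

Lemma gr_paut_alg (phi : P -> P) : is_gr_poisson_aut phi -> alg_morph phi.
Proof. by case=> [[_ phiD phiM phi1 phiZ] _]; split. Qed.

Lemma gr_paut_linear (phi : P -> P) i : is_gr_poisson_aut phi ->
  phi 'X_i = \sum_j deg1_mx phi i j *: 'X_j.
Proof.
case=> _ [phi_homog _]; rewrite {1}(dhomog1E (phi_homog _ _ _)).
  by apply: eq_bigr => j _; rewrite mxE.
by rewrite dhomogX /= mdeg1.
Qed.

Lemma gr_paut_mx_shape (phi : P -> P) : is_gr_poisson_aut phi ->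
  let A := deg1_mx phi in
  [/\ A 0 1 = 0, A 0 2 = 0, A 1 0 = 0, A 1 2 = 0 & A 2 2 = A 0 0].
Proof.
move=> phi_gr A; have phi_alg := gr_paut_alg phi_gr.
have phiX i : phi 'X_i = \sum_j A i j *: 'X_j := gr_paut_linear i phi_gr.
have [_ r12 r20] : bracket_relations (fun i => phi 'X_i).
  by apply: alg_morph_bracket_relations => //; case: phi_gr => _ [].
rewrite /= !phiX in r12 r20.
pose ev v := (congr1 (meval v) r12, congr1 (meval v) r20).
have [_ e20_001] := ev (pt3 0 0 1).
have [_ e20_010] := ev (pt3 0 1 0).
have [e12_100 e20_100] := ev (pt3 1 0 0).
have [e12_101 _] := ev (pt3 1 0 1).
rewrite !(meval_pbr_linear, mevalM, rmorph_nat, meval_linear_form, big_ord3) /pt3 /=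
  in e20_001 e20_010 e12_100 e20_100 e12_101.
rewrite !(mulr0, mul0r, mulr1, mul1r, addr0, add0r, subr0, sub0r, expr0n, expr1n) /=
  in e20_001 e20_010 e12_100 e20_100 e12_101.
have sq_eq0 (x : k) : 0 = x * x -> x = 0 by move/esym/eqP; rewrite mulf_eq0 orbb => /eqP.
have A02 := sq_eq0 _ e20_001; have A01 := sq_eq0 _ e20_010.
have A00_neq0 : A 0 0 != 0.
  apply: contra_neq (mpolyXU_neq0 (0 : 'I_3)) => A00_0.
  case: (phi_gr) => [[/bij_inj phi_inj _ _ _ _] _]; apply: phi_inj.
  by rewrite phiX big_ord3 /= A00_0 A01 A02 !scale0r !addr0 (alg_morph0 phi_alg).
have A22 : A 2 2 = A 0 0 by apply: (mulIf A00_neq0); rewrite -e20_100 A02 mulr0 subr0.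
have A12 : A 1 2 = 0.
  have : 2%:R * A 0 0 * A 1 2
      = 2%:R * (A 0 0 + A 0 2) * (A 1 0 + A 1 2) - 2%:R * A 0 0 * A 1 0.
    by rewrite A02; ring.
  rewrite -e12_101 -e12_100 subrr => /eqP.
  by rewrite !mulf_eq0 (negbTE (natf_neq0 _)) // (negbTE A00_neq0) => /eqP.
have A10 : A 1 0 = 0.
  have : 3%:R * A 0 0 * A 1 0 = 2%:R * A 0 0 * A 1 0 - (A 1 2 * A 2 0 - A 1 0 * A 2 2).
    by rewrite A12 A22; ring.
  rewrite -e12_100 subrr => /eqP.
  by rewrite !mulf_eq0 (negbTE (natf_neq0 _)) // (negbTE A00_neq0) => /eqP.
by split.
Qed.

Section Reflection.
Variables (r : P -> P) (xi : k) (n : nat).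
Hypotheses (r_gr : is_gr_poisson_aut r) (n_gt0 : (0 < n)%N) (r_order : forall f, iter n r f = f).
Hypotheses (xi_neq1 : xi != 1) (r_char : char_poly (deg1_mx r) = ('X - 1) ^+ 2 * ('X - xi%:P)).
Local Notation A := (deg1_mx r).

Lemma reflection_mx_diag : A 0 0 = 1 /\ A 1 1 = xi.
Proof.
have [A01 A02 _ A12 A22] := gr_paut_mx_shape r_gr.
have A_trig : is_trig_mx A.
  by apply/is_trig_mxP => i j; case: (ord3P i) => ->; case: (ord3P j) => ->.
apply: cubic_roots_eq => //; rewrite -r_char char_poly_trig // big_ord3 /= A22.
by rewrite [RHS]mulrAC -expr2.
Qed.

Lemma reflection_mx20 : A 2 0 = 0.
Proof.
have [A01 A02 A10 A12 A22] := gr_paut_mx_shape r_gr.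
have [A00 _] := reflection_mx_diag; rewrite A00 in A22.
have r_lin := linear_dhomog1 (gr_paut_alg r_gr) (fun i => gr_paut_linear i r_gr).
have iter_X2 j : [/\ iter j r 'X_2 \is 1.-homog, (iter j r 'X_2)@_U_(2) = 1
    & (iter j r 'X_2)@_U_(0) = A 2 0 *+ j].
  elim: j => [|j [homog_j coef2_j coef0_j]].
    by rewrite /= dhomogX /= mdeg1 !mcoeffXU.
  rewrite iterS r_lin // linear_form_dhomog1 !mcoeff_linear_form !big_ord3 /=.
  by rewrite coef2_j coef0_j A00 A10 A02 A12 A22 mulrS; split=> //; ring.
have [_ _] := iter_X2 n; rewrite r_order mcoeffXU /= => /esym/eqP.
by rewrite -[_ *+ n]mulr_natr mulf_eq0 (negbTE (natf_neq0 n_gt0)) orbF => /eqP.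
Qed.

End Reflection.

(** * The affine action of G *)

(* g is affine when it acts as x1 |-> x1, x2 |-> b x2, x3 |-> x3 + e x2 with
   b a root of unity; then aff g = (b, e), and composition of such maps is
   the product aff_mul of the affine group of the line, t |-> b t + e. *)
Definition aff (g : P -> P) : k * k := ((g 'X_1)@_U_(1), (g 'X_2)@_U_(1)).

Definition aff_mul (s t : k * k) : k * k := (s.1 * t.1, s.2 + s.1 * t.2).

Definition is_affine (g : P -> P) :=
  [/\ g 'X_0 = 'X_0, g 'X_1 = (aff g).1 *: 'X_1, g 'X_2 = 'X_2 + (aff g).2 *: 'X_1
    & exists2 N, (0 < N)%N & (aff g).1 ^+ N = 1].

Lemma is_affineP (g : P -> P) b e N : (0 < N)%N -> b ^+ N = 1 ->
    g 'X_0 = 'X_0 -> g 'X_1 = b *: 'X_1 -> g 'X_2 = 'X_2 + e *: 'X_1 ->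
  is_affine g /\ aff g = (b, e).
Proof.
move=> N_gt0 bN g0 g1 g2.
have affg : aff g = (b, e) by rewrite /aff g1 g2 mcoeffD !mcoeffZ !mcoeffXU /= !mulr1 add0r.
by split=> //; rewrite /is_affine affg; split=> //; exists N.
Qed.

Lemma is_affine_eq (g h : P -> P) : g =1 h -> is_affine h -> is_affine g /\ aff g = aff h.
Proof. by move=> gh [h0 h1 h2 [N N_gt0 hN]]; apply: (is_affineP N_gt0 hN); rewrite ?gh. Qed.

Lemma is_affine_comp (g h : P -> P) : alg_morph g -> is_affine g -> is_affine h ->
  is_affine (g \o h) /\ aff (g \o h) = aff_mul (aff g) (aff h).
Proof.
move=> g_alg [g0 g1 g2 [M M_gt0 gM]] [h0 h1 h2 [N N_gt0 hN]].
move: (aff g) (aff h) g1 g2 gM h1 h2 hN => [bg eg] [bh eh] /= g1 g2 gM h1 h2 hN.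
apply: (@is_affineP _ _ _ (M * N)); rewrite /= ?muln_gt0 ?M_gt0 //.
- by rewrite exprMn exprM gM expr1n mulnC exprM hN expr1n mulr1.
- by rewrite h0 g0.
- by rewrite h1 (alg_morphZ g_alg) g1 scalerA mulrC.
rewrite h2 (alg_morphD g_alg) (alg_morphZ g_alg) g2 g1 scalerA.
by rewrite -addrA -scalerDl mulrC.
Qed.

Lemma poisson_reflection_affine (r : P -> P) : poisson_reflection r -> is_affine r.
Proof.
case=> r_gr [[n [n_gt0 r_order]] [xi [xi_neq1 [m [m_gt0 xi_prim]] r_char]]].
have [A01 A02 A10 A12 A22] := gr_paut_mx_shape r_gr.
have [A00 A11] := reflection_mx_diag r_gr xi_neq1 r_char.
have A20 := reflection_mx20 r_gr n_gt0 r_order xi_neq1 r_char.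
have rX i := gr_paut_linear i r_gr.
have [] // := @is_affineP r xi (deg1_mx r 2 1) m m_gt0 (prim_expr_order xi_prim).
- by rewrite rX big_ord3 /= A00 A01 A02 scale1r !scale0r !addr0.
- by rewrite rX big_ord3 /= A10 A11 A12 !scale0r add0r addr0.
by rewrite rX big_ord3 /= A20 A22 A00 scale0r scale1r add0r addrC.
Qed.

Lemma reflections_comp_affine (rs : seq (P -> P)) :
    (forall r, List.In r rs -> poisson_reflection r) ->
  is_affine (foldr (fun r acc => r \o acc) id rs).
Proof.
elim: rs => [|r rs IH] rs_refl /=.
  by have [] // := @is_affineP id 1 0 1; rewrite ?scale1r ?scale0r ?addr0.
have r_refl : poisson_reflection r by apply: rs_refl; left.
have [] // := is_affine_comp (gr_paut_alg r_refl.1) (poisson_reflection_affine r_refl)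
  (IH (fun r' r'_rs => rs_refl r' (or_intror r'_rs))).
Qed.

Lemma generated_affine (G : seq (P -> P)) :
  generated_by_reflections G -> forall g, List.In g G -> is_affine g.
Proof.
move=> G_gen g gG; have [rs [rs_refl g_rs]] := G_gen g gG.
by have [] := is_affine_eq g_rs (reflections_comp_affine (fun r r_rs => (rs_refl r r_rs).2)).
Qed.

Lemma generated_has_reflection (G : seq (P -> P)) g f :
    generated_by_reflections G -> List.In g G -> g f <> f ->
  exists2 r, List.In r G & poisson_reflection r.
Proof.
move=> G_gen gG gf_neq; have [[|r rs] [rs_refl g_rs]] := G_gen g gG.
  by case: gf_neq; rewrite g_rs.
by have [] := rs_refl r (or_introl erefl); exists r.
Qed.

Lemma affine_common_exponent (G : seq (P -> P)) :
    (forall g, List.In g G -> is_affine g) ->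
  exists N, forall g, List.In g G -> (aff g).1 ^+ N.+1 = 1.
Proof.
elim: G => [|g G IH] G_aff; first by exists 0%N.
have [N GN] := IH (fun h hG => G_aff h (or_intror hG)).
have [_ _ _ [M M_gt0 gM]] := G_aff g (or_introl erefl).
exists (N.+1 * M).-1; rewrite prednK ?muln_gt0 // => h [<-|hG].
  by rewrite mulnC exprM gM expr1n.
by rewrite exprM GN ?expr1n.
Qed.

Definition aff_image (G : seq (P -> P)) : seq (k * k) := undup (map aff G).

Lemma mem_aff_image (G : seq (P -> P)) s :
  reflect (exists2 g, List.In g G & s = aff g) (s \in aff_image G).
Proof.
rewrite mem_undup; elim: G => [|g G IH] /=; first by constructor => -[].
rewrite in_cons; case: eqP => [->|s_neq] /=; first by constructor; exists g; first left.
apply: (iffP IH) => [[h hG ->]|[h [<-|hG] s_h]]; [by exists h; first right | by [] | by exists h].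
Qed.

Lemma size_aff_image_gt0 (G : seq (P -> P)) : List.In id G -> (0 < size (aff_image G))%N.
Proof.
move=> idG; have : aff id \in aff_image G by apply/mem_aff_image; exists id.
by case: (aff_image G).
Qed.

(* |S| (x3 + c x2), where c, the average of the translation parts e over S,
   is the common fixed point of the affine maps t |-> b t + e in S: each h
   in G permutes S by left multiplication. *)
Definition averaged_x3 (G : seq (P -> P)) : P :=
  (size (aff_image G))%:R *: 'X_2 + (\sum_(s <- aff_image G) s.2) *: 'X_1.

Lemma averaged_x3_invariant (G : seq (P -> P)) :
    is_finite_subgroup G -> (forall g, List.In g G -> is_affine g) ->
  Defs.invariant G (averaged_x3 G).
Proof.
move=> [G_gr _ G_comp _] G_aff h hG; set S := aff_image G.
have h_alg := gr_paut_alg (G_gr h hG).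
have [h0 h1 h2 [N N_gt0 hN]] := G_aff h hG.
have bh_neq0 : (aff h).1 != 0.
  apply/eqP => bh0; move: hN; rewrite bh0 expr0n eqn0Ngt N_gt0 /=.
  by move/eqP; rewrite eq_sym oner_eq0.
have mulS_sub : {subset map (aff_mul (aff h)) S <= S}.
  move=> _ /mapP [_ /mem_aff_image [g gG ->] ->].
  have [_ <-] := is_affine_comp h_alg (G_aff h hG) (G_aff g gG).
  by apply/mem_aff_image; exists (h \o g) => //; apply: G_comp.
have mulS_uniq : uniq (map (aff_mul (aff h)) S).
  rewrite map_inj_uniq ?undup_uniq // => [[a b] [c d]] [/(mulfI bh_neq0) -> /addrI].
  by move/(mulfI bh_neq0) ->.
have [_ mulS_eq] := uniq_min_size mulS_uniq mulS_sub (eq_leq (esym (size_map _ S))).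
have mulS_perm := uniq_perm mulS_uniq (undup_uniq _) mulS_eq.
have sum_shift : \sum_(s <- S) s.2 = (size S)%:R * (aff h).2 + (aff h).1 * \sum_(s <- S) s.2.
  rewrite -[in LHS](perm_big _ mulS_perm) big_map big_split /= -mulr_sumr.
  by rewrite big_const_seq count_predT iter_addr_0 mulr_natl.
rewrite /averaged_x3 -/S (alg_morphD h_alg) !(alg_morphZ h_alg) h1 h2 scalerDr !scalerA.
by rewrite -addrA -scalerDl [_ * (aff h).1]mulrC -sum_shift.
Qed.

(** * Jacobians of invariants *)

Section PoissonIsomorphism.
Variables (G : seq (P -> P)) (psi : P -> P).
Hypotheses (psi_alg : alg_morph psi) (psi_pbr : forall f g, psi (pbr f g) = pbr (psi f) (psi g)).
Hypotheses (psi_inv : forall f, Defs.invariant G (psi f))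
  (psi_onto : forall h, Defs.invariant G h -> exists f, psi f = h).
Variable r : P -> P.
Hypotheses (rG : List.In r G) (r_refl : poisson_reflection r).

Lemma det_jacobian_iso_eq0 : meval (pt3 0 1 0) (\det (jacobian (fun l => psi 'X_l))) = 0.
Proof.
have [r_gr [_ [xi [xi_neq1 _ r_char]]]] := r_refl.
rewrite (meval_casimir_multiplier (h := psi 'X_0 ^+ 2 * psi 'X_1)).
  apply: (det_jacobian0_invariant (A := deg1_mx r) (gr_paut_alg r_gr)).
  - by move=> i; apply: gr_paut_linear.
  - by move=> i; apply: psi_inv.
  by rewrite (det_reflection_char_poly r_char).
exact: (mderiv_casimir_comp (alg_morph_bracket_relations psi_alg psi_pbr)).
Qed.

Lemma invariant_jacobian_singular (q : 'I_3 -> P) :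
  (forall i, Defs.invariant G (q i)) -> meval (pt3 0 1 0) (\det (jacobian q)) = 0.
Proof.
move=> q_inv; have [F psiF] := fin_all_exists (fun i => psi_onto (q_inv i)).
have -> : jacobian q = jacobian (psi \o F) by apply/matrixP => i j; rewrite !mxE /= psiF.
by rewrite jacobian_alg_morph // det_mulmx mevalM det_jacobian_iso_eq0 mulr0.
Qed.

End PoissonIsomorphism.

Definition affine_invariants (G : seq (P -> P)) N (i : 'I_3) : P :=
  [:: 'X_0; 'X_1 ^+ N.+1; averaged_x3 G]`_i.

Lemma affine_invariantsP (G : seq (P -> P)) N :
    is_finite_subgroup G -> (forall g, List.In g G -> is_affine g) ->
    (forall g, List.In g G -> (aff g).1 ^+ N.+1 = 1) ->
  forall i, Defs.invariant G (affine_invariants G N i).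
Proof.
move=> G_sub G_aff GN i g gG; have [G_gr _ _ _] := G_sub.
have [g0 g1 _ _] := G_aff g gG.
case: (ord3P i) => ->; rewrite /affine_invariants /=.
- exact: g0.
- by rewrite (alg_morphX (gr_paut_alg (G_gr g gG))) g1 exprZn GN // scale1r.
exact: averaged_x3_invariant.
Qed.

Lemma det_jacobian_affine_invariants (G : seq (P -> P)) N :
  meval (pt3 0 1 0) (\det (jacobian (affine_invariants G N)))
    = (N.+1 * size (aff_image G))%:R.
Proof.
rewrite det_mx33 !mxE /affine_invariants /averaged_x3 /=.
rewrite !mderivXn !mderivD !mderivZ !mderivXU /=.
rewrite !(mul0r, mulr0, mul0rn, mulr1, mul1r, scaler0, addr0, subr0, sub0r).
rewrite mevalM mevalMn mevalZ meval1 (rmorphXn (meval _)) /= mevalXU /pt3 /=.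
by rewrite expr1n mulr1 natrM mulr_natl.
Qed.

End PoissonPolynomials.

Theorem lemma3p2p2 (k : closedFieldType) (char0 : [pchar k] =i pred0)
  (G : seq ({mpoly k[3]} -> {mpoly k[3]})) :
  is_finite_subgroup G ->
  generated_by_reflections G ->
  (exists2 g, List.In g G & exists f, g f <> f) ->
  ~ invariants_poisson_iso_P G.
Proof.
move=> G_sub G_gen [g gG [f gf_neq]] [psi [[_ psiD psiM psi1 psiZ] [psi_inv psi_onto psi_pbr]]].
have psi_alg : alg_morph psi by split.
have [r rG r_refl] := generated_has_reflection G_gen gG gf_neq.
have G_aff := generated_affine char0 G_gen.
have [N GN] := affine_common_exponent G_aff.
have := invariant_jacobian_singular char0 psi_alg psi_pbr psi_inv psi_onto rG r_refl
  (affine_invariantsP G_sub G_aff GN).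
rewrite det_jacobian_affine_invariants => /eqP.
rewrite ((pcharf0P _).1 char0) muln_eq0 /= -leqn0 leqNgt size_aff_image_gt0 //.
by case: G_sub.
Qed.
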